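(* (i) For every $\mathbf A\in\mathsf{ICM}$, the ring reduct $\mathbf A^-$ is a reduced commutative ring. (ii) For every reduced commutative ring $\mathbf A$ there is $\mathbf B\in\mathsf{ICM}$ such that $\mathbf A$ is a subring of $\mathbf B^-$.
   Context: Rings are unital in the language $\{+,\cdot,-,0,1\}$; reduced means no nonzero nilpotents. A field is weakly rooted if it has characteristic $0$, or prime characteristic $p$ with every element having a $p$-th root. Weak inverse: $a^*=a^{-1}$ if $a\ne0$, $0^*=0$; weak $p$-root: $r_p(a)=\sqrt[p]{a}$ if the characteristic is $p$, else $0$. An implicitly closed field is a weakly rooted field expanded by $(\,)^*$ and all $r_p$; $\mathsf{ICM}$ is the class of algebras isomorphic to subalgebras of direct products of implicitly closed fields. For $\mathbf A\in\mathsf{ICM}$, $\mathbf A^-$ denotes its reduct to $\{+,\cdot,-,0,1\}$. *)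

From HB Require Import structures.
From mathcomp Require Import all_boot all_algebra.
Set Implicit Arguments. Unset Strict Implicit. Unset Printing Implicit Defensive.
Import GRing.Theory.
Local Open Scope ring_scope.

Record icAlg := ICAlg {
  ic_car :> Type;
  ic_add : ic_car -> ic_car -> ic_car;
  ic_mul : ic_car -> ic_car -> ic_car;
  ic_opp : ic_car -> ic_car;
  ic_zero : ic_car;
  ic_one : ic_car;
  ic_star : ic_car -> ic_car;
  ic_root : forall p : nat, prime p -> ic_car -> ic_car }.

Definition weakly_rooted (F : fieldType) : Prop :=
  [pchar F] =i pred0 \/
  exists p : nat, p \in [pchar F] /\ forall a : F, exists b : F, b ^+ p = a.

(* The weak inverse
   is mathcomp's field inverse (which satisfies 0^-1 = 0). *)
Record icField := ICField {
  icf :> fieldType;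
  icf_root : forall p : nat, prime p -> icf -> icf;
  icf_wr : weakly_rooted icf;
  icf_root_spec : forall (p : nat) (hp : prime p) (a : icf),
    if p \in [pchar icf] then icf_root hp a ^+ p = a else icf_root hp a = 0 }.

Definition alg_of_icField (F : icField) : icAlg :=
  @ICAlg F (@GRing.add F) (@GRing.mul F) (@GRing.opp F) 0 1
         (@GRing.inv F) (@icf_root F).

Definition prod_alg (I : Type) (A : I -> icAlg) : icAlg :=
  @ICAlg (forall i, A i)
    (fun f g i => ic_add (f i) (g i))
    (fun f g i => ic_mul (f i) (g i))
    (fun f i => ic_opp (f i))
    (fun i => ic_zero (A i))
    (fun i => ic_one (A i))
    (fun f i => ic_star (f i))
    (fun p hp f i => ic_root hp (f i)).

Definition is_hom (A B : icAlg) (h : A -> B) : Prop :=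
  (forall x y, h (ic_add x y) = ic_add (h x) (h y)) /\
  (forall x y, h (ic_mul x y) = ic_mul (h x) (h y)) /\
  (forall x, h (ic_opp x) = ic_opp (h x)) /\
  h (ic_zero A) = ic_zero B /\
  h (ic_one A) = ic_one B /\
  (forall x, h (ic_star x) = ic_star (h x)) /\
  (forall p (hp : prime p) x, h (ic_root hp x) = ic_root hp (h x)).

Definition ICM (A : icAlg) : Prop :=
  exists (I : Type) (F : I -> icField)
         (h : A -> prod_alg (fun i => alg_of_icField (F i))),
    injective h /\ is_hom h.

Definition reduct_comRing (A : icAlg) : Prop :=
  associative (@ic_add A) /\ commutative (@ic_add A) /\
  left_id (ic_zero A) (@ic_add A) /\
  left_inverse (ic_zero A) (@ic_opp A) (@ic_add A) /\
  associative (@ic_mul A) /\ commutative (@ic_mul A) /\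
  left_id (ic_one A) (@ic_mul A) /\
  left_distributive (@ic_mul A) (@ic_add A).

Definition ic_pow (A : icAlg) (x : A) (n : nat) : A := iter n (ic_mul x) (ic_one A).

Definition reduct_reduced (A : icAlg) : Prop :=
  forall (x : A) (n : nat), ic_pow x n.+1 = ic_zero A -> x = ic_zero A.

Definition reduced_ring (R : pzRingType) : Prop :=
  forall (x : R) (n : nat), x ^+ n.+1 = 0 -> x = 0.

Definition subring_embedding (R : pzRingType) (B : icAlg) (f : R -> B) : Prop :=
  injective f /\
  (forall x y, f (x + y) = ic_add (f x) (f y)) /\
  (forall x y, f (x * y) = ic_mul (f x) (f y)) /\
  (forall x, f (- x) = ic_opp (f x)) /\
  f 0 = ic_zero B /\
  f 1 = ic_one B.

From HB Require Import structures.
From mathcomp Require Import all_boot all_algebra.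
From mathcomp Require Import zify boolp classical_sets.
Set Implicit Arguments. Unset Strict Implicit. Unset Printing Implicit Defensive.
Import GRing.Theory.
Local Open Scope ring_scope.
Local Open Scope quotient_scope.

(** A subalgebra of a product of fields satisfies every ring identity
    componentwise and has no nilpotents, since fields have none.

    Conversely, let [R] be reduced and [x <> 0]. Then [x] is not nilpotent, so
    by Zorn's lemma there is an ideal maximal among those missing every power
    of [x]; it is prime, and [R -> Frac (R/P)] does not kill [x]. Every field
    embeds into an implicitly closed one: in characteristic [0] it already is
    one, and in characteristic [p] its perfect closure is. The product over all
    [x <> 0] of these fields is in ICM and receives [R] injectively. *)

Section WeakRoots.
Variables (F : fieldType) (F_wr : weakly_rooted F).

Lemma weak_root_exists (q : nat) (a : F) :
  exists b : F, if q \in [pchar F] then b ^+ q == a else b == 0.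
Proof.
case Fq: (q \in [pchar F]); last by exists 0.
case: F_wr => [F0 | [p [Fp Fp_roots]]]; first by move: (F0 q); rewrite Fq.
have /eqP-> : q == p by move: (pcharf_eq Fp q); rewrite Fq.
by have [b <-] := Fp_roots a; exists b.
Qed.

Definition weak_root (q : nat) (_ : prime q) (a : F) : F :=
  xchoose (weak_root_exists q a).

Lemma weak_rootP (q : nat) (q_pr : prime q) (a : F) :
  if q \in [pchar F] then weak_root q_pr a ^+ q = a else weak_root q_pr a = 0.
Proof. by move: (xchooseP (weak_root_exists q a)); case: ifP => _ /eqP. Qed.

Definition icField_of_weakly_rooted : icField := @ICField F weak_root F_wr weak_rootP.

End WeakRoots.

(** The perfect closure of a field [F] of characteristic [p]: a pair [(n, a)]
    stands for [a ^ (1 / p ^ n)], and [(n, a)], [(m, b)] are identified when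
    [a ^+ p ^ m = b ^+ p ^ n]. *)
Section PerfectClosure.
Variables (F : fieldType) (p : nat).
Hypothesis pcharFp : p \in [pchar F].

Lemma pchar_pnat_expn k : [pchar F].-nat (p ^ k)%N.
Proof.
rewrite (eq_pnat _ (pcharf_eq pcharFp)).
by rewrite pnatX pnat_id ?orbT // (pcharf_prime pcharFp).
Qed.

Lemma expn_pchar_gt0 k : (0 < p ^ k)%N.
Proof. by rewrite expn_gt0 prime_gt0 ?(pcharf_prime pcharFp). Qed.

Lemma exprD_pchar_expn k (a b : F) :
  (a + b) ^+ (p ^ k) = a ^+ (p ^ k) + b ^+ (p ^ k).
Proof. exact: exprDn_pchar (pchar_pnat_expn k). Qed.

Lemma exprN_pchar_expn k (a : F) : (- a) ^+ (p ^ k) = - a ^+ (p ^ k).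
Proof. exact: exprNn_pchar (pchar_pnat_expn k). Qed.

Lemma expr_pchar_expn_inj k : injective (fun a : F => a ^+ (p ^ k)).
Proof.
move=> a b /= eq_ab; apply/eqP; rewrite -subr_eq0.
have : (a - b) ^+ (p ^ k) == 0 by rewrite exprD_pchar_expn exprN_pchar_expn eq_ab subrr.
by rewrite expf_eq0 => /andP[].
Qed.

Lemma expr_expnM i j (a : F) : a ^+ (p ^ i) ^+ (p ^ j) = a ^+ (p ^ (i + j)).
Proof. by rewrite -exprM -expnD. Qed.

(* [ppow N x] is the [p ^ N]-th power of the element represented by [x]; it
   lies in [F] as soon as [x.1 <= N]. *)
Definition ppow (N : nat) (x : nat * F) : F := x.2 ^+ (p ^ (N - x.1)).

Definition pcl_eqv (x y : nat * F) : bool := x.2 ^+ (p ^ y.1) == y.2 ^+ (p ^ x.1).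

Lemma pcl_eqvE x y N :
  (x.1 <= N)%N -> (y.1 <= N)%N -> pcl_eqv x y = (ppow N x == ppow N y).
Proof.
move=> xN yN; apply/eqP/eqP => [eq_xy | eq_N].
  apply: (@expr_pchar_expn_inj (x.1 + y.1)); rewrite /ppow /= !expr_expnM.
  have -> : (N - x.1 + (x.1 + y.1) = y.1 + N)%N by lia.
  have -> : (N - y.1 + (x.1 + y.1) = x.1 + N)%N by lia.
  by rewrite -!expr_expnM eq_xy.
apply: (@expr_pchar_expn_inj N); rewrite /= !expr_expnM.
move: eq_N => /(congr1 (fun z => z ^+ (p ^ (x.1 + y.1)))); rewrite /ppow !expr_expnM.
have -> : (N - x.1 + (x.1 + y.1) = y.1 + N)%N by lia.
by have -> : (N - y.1 + (x.1 + y.1) = x.1 + N)%N by lia.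
Qed.

Lemma ppowE N n (a : F) : ppow N (n, a) = a ^+ (p ^ (N - n)).
Proof. by []. Qed.

Lemma ppow_ppow x M N :
  (x.1 <= M)%N -> (M <= N)%N -> ppow N (M, ppow M x) = ppow N x.
Proof. by move=> xM MN; rewrite /ppow /= expr_expnM; congr (_ ^+ (p ^ _)); lia. Qed.

Lemma ppow0 N : ppow N (0%N, 0) = 0.
Proof. by rewrite ppowE expr0n eqn0Ngt expn_pchar_gt0. Qed.

Lemma ppow1 N : ppow N (0%N, 1) = 1.
Proof. by rewrite ppowE expr1n. Qed.

Lemma pcl_eqv_refl : reflexive pcl_eqv. Proof. by move=> x; rewrite /pcl_eqv. Qed.
Lemma pcl_eqv_sym : symmetric pcl_eqv. Proof. by move=> x y; rewrite /pcl_eqv eq_sym. Qed.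
Lemma pcl_eqv_trans : transitive pcl_eqv.
Proof.
move=> y x z; set N := (x.1 + y.1 + z.1)%N.
rewrite !(@pcl_eqvE _ _ N) /N; try lia.
by move=> /eqP -> /eqP ->.
Qed.

Canonical pcl_eqv_equiv := EquivRel pcl_eqv pcl_eqv_refl pcl_eqv_sym pcl_eqv_trans.
Definition pclosure := {eq_quot pcl_eqv}.
HB.instance Definition _ : EqQuotient _ pcl_eqv pclosure := EqQuotient.on pclosure.
HB.instance Definition _ := Choice.on pclosure.

Local Notation K := pclosure.

Lemma pcl_eqmod x y N : (x.1 <= N)%N -> (y.1 <= N)%N ->
  (\pi_K x == \pi_K y) = (ppow N x == ppow N y).
Proof. by move=> xN yN; rewrite eqmodE; apply: pcl_eqvE. Qed.

Lemma pcl_piP x y N : (x.1 <= N)%N -> (y.1 <= N)%N ->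
  reflect (\pi_K x = \pi_K y) (ppow N x == ppow N y).
Proof. by move=> xN yN; rewrite -(pcl_eqmod xN yN); apply: eqP. Qed.

Definition pcl_addr (x y : nat * F) : nat * F :=
  ((x.1 + y.1)%N, ppow (x.1 + y.1) x + ppow (x.1 + y.1) y).
Definition pcl_mulr (x y : nat * F) : nat * F :=
  ((x.1 + y.1)%N, ppow (x.1 + y.1) x * ppow (x.1 + y.1) y).
Definition pcl_oppr (x : nat * F) : nat * F := (x.1, - x.2).
Definition pcl_invr (x : nat * F) : nat * F := (x.1, x.2^-1).

Lemma pcl_level :
  ((forall x y, (pcl_addr x y).1 = (x.1 + y.1)%N) *
   (forall x y, (pcl_mulr x y).1 = (x.1 + y.1)%N) *
   (forall x, (pcl_oppr x).1 = x.1) * (forall x, (pcl_invr x).1 = x.1))%type.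
Proof. by []. Qed.

Arguments pcl_addr : simpl never.
Arguments pcl_mulr : simpl never.
Arguments pcl_oppr : simpl never.
Arguments pcl_invr : simpl never.

Lemma ppowD x y N : (x.1 + y.1 <= N)%N -> ppow N (pcl_addr x y) = ppow N x + ppow N y.
Proof. by move=> xyN; rewrite /pcl_addr ppowE exprD_pchar_expn -!ppowE !ppow_ppow //; lia. Qed.

Lemma ppowM x y N : (x.1 + y.1 <= N)%N -> ppow N (pcl_mulr x y) = ppow N x * ppow N y.
Proof. by move=> xyN; rewrite /pcl_mulr ppowE exprMn -!ppowE !ppow_ppow //; lia. Qed.

Lemma ppowN x N : ppow N (pcl_oppr x) = - ppow N x.
Proof. by rewrite /pcl_oppr ppowE exprN_pchar_expn. Qed.

Lemma ppowV x N : ppow N (pcl_invr x) = (ppow N x)^-1.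
Proof. by rewrite /pcl_invr ppowE exprVn. Qed.

(* [locked] keeps the representatives chosen by [repr] from unfolding. *)
Definition pcl_zero : K := \pi_K (0%N, 0).
Definition pcl_one : K := \pi_K (0%N, 1).
Definition pcl_add (a b : K) : K := locked (\pi_K (pcl_addr (repr a) (repr b))).
Definition pcl_mul (a b : K) : K := locked (\pi_K (pcl_mulr (repr a) (repr b))).
Definition pcl_opp (a : K) : K := locked (\pi_K (pcl_oppr (repr a))).
Definition pcl_inv (a : K) : K := locked (\pi_K (pcl_invr (repr a))).

Lemma pi_ppow u v N :
  \pi_K u = \pi_K v -> (u.1 <= N)%N -> (v.1 <= N)%N -> ppow N u = ppow N v.
Proof. by move=> eq_uv uN vN; apply/eqP/(pcl_piP uN vN). Qed.

Lemma pi_pcl_add x y : \pi_K (pcl_addr x y) = pcl_add (\pi_K x) (\pi_K y).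
Proof.
move: (reprK (\pi_K x)) (reprK (\pi_K y)); rewrite /pcl_add -lock.
move: (repr _) (repr _) => x' y' eq_x eq_y.
apply/(@pcl_piP _ _ (x.1 + y.1 + x'.1 + y'.1)); rewrite ?pcl_level; try lia.
by rewrite !ppowD ?(pi_ppow eq_x) ?(pi_ppow eq_y) //; lia.
Qed.

Lemma pi_pcl_mul x y : \pi_K (pcl_mulr x y) = pcl_mul (\pi_K x) (\pi_K y).
Proof.
move: (reprK (\pi_K x)) (reprK (\pi_K y)); rewrite /pcl_mul -lock.
move: (repr _) (repr _) => x' y' eq_x eq_y.
apply/(@pcl_piP _ _ (x.1 + y.1 + x'.1 + y'.1)); rewrite ?pcl_level; try lia.
by rewrite !ppowM ?(pi_ppow eq_x) ?(pi_ppow eq_y) //; lia.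
Qed.

Lemma pi_pcl_opp x : \pi_K (pcl_oppr x) = pcl_opp (\pi_K x).
Proof.
move: (reprK (\pi_K x)); rewrite /pcl_opp -lock; move: (repr _) => x' eq_x.
apply/(@pcl_piP _ _ (x.1 + x'.1)); rewrite ?pcl_level; try lia.
by rewrite !ppowN (pi_ppow eq_x) //; lia.
Qed.

Lemma pi_pcl_inv x : \pi_K (pcl_invr x) = pcl_inv (\pi_K x).
Proof.
move: (reprK (\pi_K x)); rewrite /pcl_inv -lock; move: (repr _) => x' eq_x.
apply/(@pcl_piP _ _ (x.1 + x'.1)); rewrite ?pcl_level; try lia.
by rewrite !ppowV (pi_ppow eq_x) //; lia.
Qed.

Lemma pcl_addA : associative pcl_add.
Proof.
elim/quotW=> x; elim/quotW=> y; elim/quotW=> z; rewrite -!pi_pcl_add.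
apply/(@pcl_piP _ _ (x.1 + y.1 + z.1)); rewrite ?pcl_level; try lia.
by rewrite !ppowD ?pcl_level ?addrA //; lia.
Qed.

Lemma pcl_addC : commutative pcl_add.
Proof.
elim/quotW=> x; elim/quotW=> y; rewrite -!pi_pcl_add.
apply/(@pcl_piP _ _ (x.1 + y.1)); rewrite ?pcl_level; try lia.
by rewrite !ppowD 1?addrC //; lia.
Qed.

Lemma pcl_add0 : left_id pcl_zero pcl_add.
Proof.
elim/quotW=> x; rewrite -pi_pcl_add.
apply/(@pcl_piP _ _ x.1); rewrite ?pcl_level //=.
by rewrite ppowD ?ppow0 ?add0r.
Qed.

Lemma pcl_addN : left_inverse pcl_zero pcl_opp pcl_add.
Proof.
elim/quotW=> x; rewrite -pi_pcl_opp -pi_pcl_add.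
apply/(@pcl_piP _ _ (x.1 + x.1)); rewrite ?pcl_level //=; try lia.
by rewrite ppowD ?ppowN ?ppow0 ?addNr ?pcl_level.
Qed.

HB.instance Definition _ := GRing.isZmodule.Build K pcl_addA pcl_addC pcl_add0 pcl_addN.

Lemma pcl_mulA : associative pcl_mul.
Proof.
elim/quotW=> x; elim/quotW=> y; elim/quotW=> z; rewrite -!pi_pcl_mul.
apply/(@pcl_piP _ _ (x.1 + y.1 + z.1)); rewrite ?pcl_level; try lia.
by rewrite !ppowM ?pcl_level ?mulrA //; lia.
Qed.

Lemma pcl_mulC : commutative pcl_mul.
Proof.
elim/quotW=> x; elim/quotW=> y; rewrite -!pi_pcl_mul.
apply/(@pcl_piP _ _ (x.1 + y.1)); rewrite ?pcl_level; try lia.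
by rewrite !ppowM 1?mulrC //; lia.
Qed.

Lemma pcl_mul1 : left_id pcl_one pcl_mul.
Proof.
elim/quotW=> x; rewrite -pi_pcl_mul.
apply/(@pcl_piP _ _ x.1); rewrite ?pcl_level //=.
by rewrite ppowM ?ppow1 ?mul1r.
Qed.

Lemma pcl_mulDl : left_distributive pcl_mul pcl_add.
Proof.
elim/quotW=> x; elim/quotW=> y; elim/quotW=> z.
rewrite -!pi_pcl_add -!pi_pcl_mul -!pi_pcl_add.
apply/(@pcl_piP _ _ (x.1 + y.1 + z.1 + z.1)); rewrite ?pcl_level; try lia.
by rewrite ?ppowM ?ppowD ?ppowM ?pcl_level ?mulrDl //; lia.
Qed.

Lemma pcl_one_neq0 : pcl_one != 0.
Proof. by rewrite (@pcl_eqmod _ _ 0) // ppow0 ppow1 oner_eq0. Qed.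

HB.instance Definition _ :=
  GRing.Zmodule_isComNzRing.Build K pcl_mulA pcl_mulC pcl_mul1 pcl_mulDl pcl_one_neq0.

Lemma pcl_mulV (a : K) : a != 0 -> pcl_mul (pcl_inv a) a = 1.
Proof.
elim/quotW: a => x; rewrite (@pcl_eqmod _ (0%N, 0) x.1) // ppow0 => x_neq0.
rewrite -pi_pcl_inv -pi_pcl_mul.
apply/(@pcl_piP _ _ (x.1 + x.1)); rewrite ?pcl_level //=; try lia.
rewrite ppowM ?pcl_level ?ppowV ?ppow1 ?mulVf //; try lia.
by rewrite -(ppow_ppow (leqnn x.1)) ?leq_addr // ppowE expf_neq0.
Qed.

Lemma pcl_inv0 : pcl_inv 0 = 0.
Proof.
rewrite -[0]/pcl_zero -pi_pcl_inv.
by apply/(@pcl_piP _ _ 0); rewrite // ppowV !ppow0 invr0.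
Qed.

HB.instance Definition _ := GRing.ComNzRing_isField.Build K pcl_mulV pcl_inv0.

Definition pcl_embed (a : F) : K := \pi_K (0%N, a).

Lemma pcl_embed_is_zmod_morphism : zmod_morphism pcl_embed.
Proof.
move=> a b; rewrite /pcl_embed -[_ - _ in RHS]/(pcl_add _ (pcl_opp _)).
rewrite -pi_pcl_opp -pi_pcl_add.
by apply/(@pcl_piP _ _ 0); rewrite // ppowD // ppowN !ppowE !expn0 !expr1.
Qed.

HB.instance Definition _ :=
  GRing.isZmodMorphism.Build F K pcl_embed pcl_embed_is_zmod_morphism.

Lemma pcl_embed_is_monoid_morphism : monoid_morphism pcl_embed.
Proof.
split=> // a b; rewrite /pcl_embed -[_ * _ in RHS]/(pcl_mul _ _) -pi_pcl_mul.
by apply/(@pcl_piP _ _ 0); rewrite // ppowM // !ppowE !expn0 !expr1.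
Qed.

HB.instance Definition _ :=
  GRing.isMonoidMorphism.Build F K pcl_embed pcl_embed_is_monoid_morphism.

Lemma pcl_piX n (b : F) k : (\pi_K (n, b)) ^+ k = \pi_K (n, b ^+ k).
Proof.
elim: k => [|k IHk].
  by rewrite !expr0; apply/(@pcl_piP _ _ n); rewrite // ppow1 ppowE expr1n.
rewrite exprS IHk -[_ * _]/(pcl_mul _ _) -pi_pcl_mul.
apply/(@pcl_piP _ _ (n + n)) => //=; try lia.
by rewrite ppowM //= !ppowE exprS exprMn.
Qed.

Lemma pclosure_weakly_rooted : weakly_rooted K.
Proof.
right; exists p; split; first exact: (rmorph_pchar pcl_embed pcharFp).
elim/quotW=> -[n b]; exists (\pi_K (n.+1, b)); rewrite pcl_piX.
apply/(@pcl_piP _ _ n.+1) => //=.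
by rewrite !ppowE subnn subSnn expn0 expr1 expn1.
Qed.

End PerfectClosure.

Lemma pchar0_weakly_rooted (F : fieldType) :
  ~ (exists p, p \in [pchar F]) -> weakly_rooted F.
Proof. by move=> F0; left=> q; rewrite inE; apply/negP => Fq; apply: F0; exists q. Qed.

Lemma field_icField_embedding (F : fieldType) :
  exists (E : icField) (f : {rmorphism F -> E}), injective f.
Proof.
have [[p pcharFp] | F0] := pselect (exists p, p \in [pchar F]).
  exists (icField_of_weakly_rooted (pclosure_weakly_rooted pcharFp)).
  by exists (pcl_embed pcharFp : {rmorphism F -> pclosure pcharFp}); apply: fmorph_inj.
exists (icField_of_weakly_rooted (pchar0_weakly_rooted F0)), idfun.
exact: inj_id.
Qed.
Section AvoidingPowers.
Variables (R : comPzRingType) (x : R).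
Hypothesis x_nonnil : forall n, x ^+ n != 0.

Definition ideal_avoiding_powers (A : set R) : Prop :=
  (forall a b, A a -> A b -> A (a + b)) /\ (forall r a, A a -> A (r * a)) /\
  (forall n, ~ A (x ^+ n)).

Lemma maximal_ideal_avoiding_powers : exists A, ideal_avoiding_powers A /\
  forall B, (A `<` B)%classic -> ~ ideal_avoiding_powers B.
Proof.
apply: Zorn_bigcup => C C_avoid C_chain; split; [|split].
- move=> a b [X CX Xa] [Y CY Yb].
  have [XY | YX] := C_chain _ _ CX CY.
  + by exists Y => //; apply: (C_avoid _ CY).1 => //; apply: XY.
  + by exists X => //; apply: (C_avoid _ CX).1 => //; apply: YX.
- by move=> r a [X CX Xa]; exists X => //; apply: (C_avoid _ CX).2.1.
- by move=> n [X CX Xxn]; apply: (C_avoid _ CX).2.2 Xxn.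
Qed.

Variable A : set R.
Hypotheses (A_avoid : ideal_avoiding_powers A)
  (A_max : forall B, (A `<` B)%classic -> ~ ideal_avoiding_powers B).

Lemma avoiding_add a b : A a -> A b -> A (a + b).
Proof. by case: A_avoid => addA _; apply: addA. Qed.
Lemma avoiding_mul r a : A a -> A (r * a).
Proof. by case: A_avoid => _ [mulA _]; apply: mulA. Qed.
Lemma avoiding_powers n : ~ A (x ^+ n).
Proof. by case: A_avoid => _ [_ ]; apply. Qed.

(* [A `|` [set 0]] is again avoiding, so by maximality [A] already contains [0]. *)
Lemma avoiding0 : A 0.
Proof.
apply: contrapT => A'0; apply: (A_max (B := A `|` [set 0])).
  by split=> [y Ay | sub0]; [left | apply: A'0; apply: sub0; right].
split; [|split].
- move=> a b [Aa | ->] [Ab | ->]; rewrite ?addr0 ?add0r; try by [left | right].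
  by left; apply: avoiding_add.
- by move=> r a [Aa | ->]; [left; apply: avoiding_mul | right; rewrite mulr0].
- by move=> n [/avoiding_powers | /eqP]; last rewrite (negPf (x_nonnil n)).
Qed.

(* Otherwise [A + R u] would be a strictly larger ideal avoiding the powers of [x]. *)
Lemma avoiding_extension u :
  ~ A u -> exists m a r, A a /\ x ^+ m = a + r * u.
Proof.
move=> A'u; pose B y := exists a r, A a /\ y = a + r * u.
have AB : (A `<` B)%classic.
  split=> [y Ay | BA]; first by exists y, 0; rewrite mul0r addr0.
  by apply: A'u; apply: BA; exists 0, 1; rewrite add0r mul1r; split; first exact: avoiding0.
apply: contrapT => noB; apply: (A_max AB); split; [|split].
- move=> _ _ [a [r [Aa ->]]] [b [s [Ab ->]]]; exists (a + b), (r + s).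
  by rewrite mulrDl addrACA; split; first exact: avoiding_add.
- move=> r _ [a [s [Aa ->]]]; exists (r * a), (r * s).
  by rewrite mulrDr mulrA; split; first exact: avoiding_mul.
- by move=> n [a [r [Aa e]]]; apply: noB; exists n, a, r.
Qed.

Lemma avoiding_prime u v : A (u * v) -> A u \/ A v.
Proof.
move=> Auv; apply: contrapT => /not_orP[/avoiding_extension [m [a [r [Aa em]]]]].
move=> /avoiding_extension [k [b [s [Ab ek]]]].
apply: (@avoiding_powers (m + k)); rewrite exprD em ek mulrDl !mulrDr.
apply: avoiding_add; first by apply: avoiding_add; rewrite mulrC; apply: avoiding_mul.
apply: avoiding_add; first exact: avoiding_mul.
by rewrite mulrACA; apply: avoiding_mul.
Qed.

Definition Rnz : Type := R.
HB.instance Definition _ := GRing.ComPzRing.on Rnz.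
HB.instance Definition _ := GRing.PzSemiRing_isNonZero.Build Rnz
  (x_nonnil 0 : (1 : R) != 0).

Definition avoiding_ideal : {pred Rnz} := fun y => `[< A y >].

Lemma avoiding_ideal_closed : idealr_closed avoiding_ideal.
Proof.
split; first exact/asboolP/avoiding0.
  by apply/negP => /asboolP; rewrite -(expr0 x); apply: avoiding_powers.
move=> a u v /asboolP Au /asboolP Av; apply/asboolP.
by apply: avoiding_add => //; apply: avoiding_mul.
Qed.

Lemma avoiding_ideal_prime : prime_idealr_closed avoiding_ideal.
Proof.
by move=> u v /asboolP /avoiding_prime [] A_; apply/orP; [left | right]; apply/asboolP.
Qed.

HB.instance Definition _ := isIdealr.Build Rnz avoiding_ideal avoiding_ideal_closed.
HB.instance Definition _ :=
  isPrimeIdealrClosed.Build Rnz avoiding_ideal avoiding_ideal_prime.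

Definition Q := {ideal_quot (avoiding_ideal : prime_idealr Rnz)}.
HB.instance Definition _ := GRing.ComNzRing.on Q.

(* The units of [Q] and their inverses are chosen classically; only the
   integral domain structure matters, to form the fraction field. *)
Definition Q_unit : {pred Q} := fun q => `[< exists y : Q, y * q = 1 >].
Definition Q_inv (q : Q) : Q :=
  if pselect (exists y : Q, y * q = 1) is left h then projT1 (cid h) else q.

Lemma Q_mulVr : {in Q_unit, left_inverse 1 Q_inv *%R}.
Proof. by move=> q /asboolP q_unit; rewrite /Q_inv; case: pselect => // h; case: cid. Qed.

Lemma Q_unitPl (a b : Q) : b * a = 1 -> Q_unit a.
Proof. by move=> ba1; apply/asboolP; exists b. Qed.

Lemma Q_invr_out : {in [predC Q_unit], Q_inv =1 id}.
Proof.
move=> q; rewrite inE => /asboolPn q_nonunit.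
by rewrite /Q_inv; case: pselect.
Qed.

HB.instance Definition _ :=
  GRing.ComNzRing_hasMulInverse.Build Q Q_mulVr Q_unitPl Q_invr_out.
HB.instance Definition _ :=
  GRing.ComUnitRing_isIntegral.Build Q (@Quotient.rquot_IdomainAxiom Rnz _).

Definition avoiding_point : {rmorphism Rnz -> {fraction Q}} :=
  (@tofrac Q) \o \pi_Q.

Lemma avoiding_point_x : avoiding_point x != 0.
Proof.
rewrite /= tofrac_eq0 -(rmorph0 \pi_Q) -Quotient.idealrBE subr0.
by apply/negP => /asboolP; rewrite -(expr1 x); apply: avoiding_powers.
Qed.

End AvoidingPowers.

Lemma nonnilpotent_field_point (R : comPzRingType) (x : R) :
  (forall n, x ^+ n != 0) -> exists (F : fieldType) (f : {rmorphism R -> F}), f x != 0.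
Proof.
move=> x_nonnil; have [A [A_avoid A_max]] := maximal_ideal_avoiding_powers x.
exists {fraction Q x_nonnil A_avoid A_max}.
exists (avoiding_point x_nonnil A_avoid A_max : {rmorphism R -> _}).
exact: avoiding_point_x.
Qed.

Lemma reduced_icField_point (R : comPzRingType) (x : R) :
  reduced_ring R -> x != 0 -> exists (E : icField) (f : {rmorphism R -> E}), f x != 0.
Proof.
move=> R_red x_neq0; have [|F [f fx_neq0]] := @nonnilpotent_field_point R x.
  move=> n; apply: contra_neq x_neq0; case: n => [x0_0 | n /R_red //].
  by rewrite -[x]mulr1 -(expr0 x) x0_0 mulr0.
have [E [g g_inj]] := field_icField_embedding F.
by exists E, (g \o f); rewrite /= fmorph_eq0.
Qed.

Section ProductEmbedding.
Variables (I : Type) (F : I -> icField).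
Local Notation P := (prod_alg (fun i => alg_of_icField (F i))).

Lemma prod_ext (f g : P) : (forall i, f i = g i) -> f = g.
Proof. exact: functional_extensionality_dep. Qed.

Lemma ICM_prod : ICM P.
Proof. by exists I, F, id; split=> //; do !split. Qed.

Lemma prod_subring_embedding (R : pzRingType) (f : forall i, {rmorphism R -> F i}) :
  (forall r, r != 0 -> exists i, f i r != 0) ->
  subring_embedding (fun r : R => (fun i => f i r) : P).
Proof.
move=> separating; split.
  move=> a b eq_ab; apply/eqP; rewrite -subr_eq0; apply: contraT => /separating [i].
  by rewrite rmorphB (congr1 (fun g => g i) eq_ab) subrr eqxx.
by do !split=> *; apply: prod_ext => i /=; rewrite ?(rmorphD, rmorphM, rmorphN, rmorph0, rmorph1).
Qed.

End ProductEmbedding.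

Lemma ICM_reduct_comRing (A : icAlg) : ICM A -> reduct_comRing A.
Proof.
case=> I [F [h [h_inj [hD [hM [hN [h0 [h1 _]]]]]]]].
have eqA (s t : A) : (forall i, h s i = h t i) -> s = t.
  by move=> hst; apply/h_inj/functional_extensionality_dep.
do !split.
- by move=> a b c; apply: eqA => i; rewrite !hD /= addrA.
- by move=> a b; apply: eqA => i; rewrite !hD /= addrC.
- by move=> a; apply: eqA => i; rewrite hD h0 /= add0r.
- by move=> a; apply: eqA => i; rewrite hD hN h0 /= addNr.
- by move=> a b c; apply: eqA => i; rewrite !hM /= mulrA.
- by move=> a b; apply: eqA => i; rewrite !hM /= mulrC.
- by move=> a; apply: eqA => i; rewrite hM h1 /= mul1r.
- by move=> a b c; apply: eqA => i; rewrite hM !hD !hM /= mulrDl.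
Qed.

Lemma ICM_reduct_reduced (A : icAlg) : ICM A -> reduct_reduced A.
Proof.
case=> I [F [h [h_inj [_ [hM [_ [h0 [h1 _]]]]]]]] a n an_0.
have h_pow i k : h (ic_pow a k) i = h a i ^+ k.
  by elim: k => [|k IHk]; rewrite ?h1 ?expr0 // exprS /= hM /= IHk.
apply/h_inj/functional_extensionality_dep => i; rewrite h0 /=.
by apply/eqP; move: (h_pow i n.+1); rewrite an_0 h0 => /esym/eqP; rewrite expf_eq0.
Qed.

Theorem mainTheorem16 :
  (forall A : icAlg, ICM A -> reduct_comRing A /\ reduct_reduced A) /\
  (forall R : comPzRingType, reduced_ring R ->
     exists (B : icAlg) (f : R -> B), ICM B /\ subring_embedding f).
Proof.
split=> [A A_ICM | R R_red].
  by split; [apply: ICM_reduct_comRing | apply: ICM_reduct_reduced].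
pose I := {x : R | x != 0}.
have /choice [Ef Ef_sep] : forall i : I,
    exists Ef : {E : icField & {rmorphism R -> E}}, tagged Ef (val i) != 0.
  move=> [x x_neq0]; have [E [f fx]] := reduced_icField_point R_red x_neq0.
  by exists (@Tagged icField E (fun E => {rmorphism R -> E}) f).
exists (prod_alg (fun i => alg_of_icField (tag (Ef i)))), (fun r i => tagged (Ef i) r).
split; first exact: ICM_prod.
by apply: prod_subring_embedding => x x_neq0; exists (exist _ x x_neq0).
Qed.
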